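(* Let $\lambda>0$ not be a fusion value. Let $\lambda_1$ be the largest fusion value smaller than $\lambda$ (or $\lambda_1=0$ if none exists), and let $C_1,\dots,C_K$ be the clusters of $\mathbf x^*(\lambda_1)$ (all singletons if $\lambda_1=0$). Let $(\hat{\mathbf x}_1,\dots,\hat{\mathbf x}_K)$ be the minimizer of the reduced problem (R$_\lambda$). Then $\hat{\mathbf x}_k\ne\hat{\mathbf x}_{k'}$ for all $k\ne k'$ in $[K]$.
   Context: Data: $n\ge2$, $d\ge1$, $\mathbf a_1,\dots,\mathbf a_n\in\mathbb R^d$, weights $r_i>0$. For $\lambda\ge0$, (P$_\lambda$): minimize $\frac12\sum_ir_i\|\mathbf x_i-\mathbf a_i\|^2+\lambda\sum_{i<j}r_ir_j\|\mathbf x_i-\mathbf x_j\|$ over $(\mathbb R^d)^n$, unique minimizer $\mathbf x^*(\lambda)$; the clusters of $\mathbf x^*(\lambda)$ are the classes of $i\sim j\iff\mathbf x_i^*(\lambda)=\mathbf x_j^*(\lambda)$. A value $\lambda_0>0$ is a fusion value if there are $i\ne j$ with $\mathbf x_i^*(\lambda_0)=\mathbf x_j^*(\lambda_0)$ but $\mathbf x_i^*(\lambda)\ne\mathbf x_j^*(\lambda)$ for all $\lambda\in[0,\lambda_0)$ (there are finitely many). Given a partition $C_1,\dots,C_K$ of $[n]$, set $r'_k:=\sum_{i\in C_k}r_i$, $\bar{\mathbf a}_k:=\frac1{r'_k}\sum_{i\in C_k}r_i\mathbf a_i$, and the reduced problem (R$_\lambda$): minimize over $\mathbf x_1,\dots,\mathbf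 x_K\in\mathbb R^d$ the function $\frac12\sum_kr'_k\|\mathbf x_k-\bar{\mathbf a}_k\|^2+\lambda\sum_{k<k'}r'_kr'_{k'}\|\mathbf x_k-\mathbf x_{k'}\|$. *)

From mathcomp Require Import all_boot all_order all_algebra.
From mathcomp Require Import reals.
Set Implicit Arguments. Unset Strict Implicit. Unset Printing Implicit Defensive.
Import Order.TTheory GRing.Theory Num.Theory.
Local Open Scope ring_scope.

Section ConvexClustering.
Variable R : realType.

Definition enorm (d : nat) (v : 'rV[R]_d) : R :=
  Num.sqrt (\sum_(l < d) (v 0 l) ^+ 2).

Definition cc_obj (m d : nat) (y : 'I_m -> 'rV[R]_d) (w : 'I_m -> R) (lam : R)
  (x : 'I_m -> 'rV[R]_d) : R :=
  2^-1 * \sum_(i < m) w i * (enorm (x i - y i)) ^+ 2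
  + lam * \sum_(i < m) \sum_(j < m | (i < j)%N) w i * w j * enorm (x i - x j).

Definition is_cc_min (m d : nat) (y : 'I_m -> 'rV[R]_d) (w : 'I_m -> R)
  (lam : R) (x : 'I_m -> 'rV[R]_d) : Prop :=
  forall z : 'I_m -> 'rV[R]_d, cc_obj y w lam x <= cc_obj y w lam z.

Definition is_fusion_value (n d : nat) (xstar : R -> 'I_n -> 'rV[R]_d)
  (lam0 : R) : Prop :=
  0 < lam0 /\
  exists i j : 'I_n, i != j /\ xstar lam0 i = xstar lam0 j /\
    forall lam, 0 <= lam -> lam < lam0 -> xstar lam i <> xstar lam j.

(* Reduced weights and weighted centroids for a partition given by labels
   c : 'I_n -> 'I_K (cluster C_k = c^-1(k)). *)
Definition red_weight (n K : nat) (c : 'I_n -> 'I_K) (r : 'I_n -> R)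
  (k : 'I_K) : R := \sum_(i < n | c i == k) r i.

Definition red_center (n K d : nat) (c : 'I_n -> 'I_K) (r : 'I_n -> R)
  (a : 'I_n -> 'rV[R]_d) (k : 'I_K) : 'rV[R]_d :=
  (red_weight c r k)^-1 *: \sum_(i < n | c i == k) r i *: a i.

End ConvexClustering.

(* Between consecutive fusion values the clusters of the convex-clustering
   path are frozen, so the reduced problem recovers pairwise distinct
   cluster centres.

   Write F_mu for cc_obj a r mu and Q(x, z) = sum_i r_i |z_i - x_i|^2.
   - Euclid, Objective: Euclidean geometry of row vectors, and quadratic
     growth Q(x, z) / 4 <= F_mu(z) - F_mu(x) at a minimiser x (compare with
     the midpoint configuration); hence minimisers depend continuously on mu.
   - Balanced, FirstOrder, NoSplit: clusters never split as mu grows.  Compare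
     a minimiser y at mu' >= mu with its r-weighted average ybar over the
     clusters of the minimiser x at mu.  The deviation y - ybar has zero mean
     on every cluster, so, the weights being products r_i r_j, all its linear
     interactions between distinct clusters cancel; first-order optimality of
     x and optimality of y then force y = ybar.
   - Reduction: on configurations constant on the clusters C_k, F_lam is the
     reduced objective plus a constant, so by quadratic growth the reduced
     minimiser lists the cluster values of a full minimiser constant on them.
   - FusionPath: separation persists to the right of any parameter, so the
     first parameter beyond lam1 where two separate points meet is a fusion
     value; hence the clusters of x*(lam) are those of x*(lam1), whose values
     are pairwise distinct. *)
From mathcomp Require Import all_boot all_order all_algebra.
From mathcomp Require Import reals boolp classical_sets.
From mathcomp Require Import ring lra.
Set Implicit Arguments. Unset Strict Implicit. Unset Printing Implicit Defensive.
Import Order.TTheory GRing.Theory Num.Theory.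
Local Open Scope ring_scope.

Section Euclid.
Variables (R : realType) (d : nat).
Implicit Types (u v w : 'rV[R]_d).

Definition dot u v : R := \sum_(l < d) u 0 l * v 0 l.
Definition sq u : R := dot u u.

Lemma dotC u v : dot u v = dot v u.
Proof. by apply: eq_bigr => l _; rewrite mulrC. Qed.

Lemma dotDl u v w : dot (u + v) w = dot u w + dot v w.
Proof. by rewrite /dot -big_split; apply: eq_bigr => l _; rewrite !mxE mulrDl. Qed.

Lemma dotNl u w : dot (- u) w = - dot u w.
Proof. by rewrite /dot -sumrN; apply: eq_bigr => l _; rewrite !mxE mulNr. Qed.

Lemma dotZl (k : R) u w : dot (k *: u) w = k * dot u w.
Proof. by rewrite /dot mulr_sumr; apply: eq_bigr => l _; rewrite !mxE mulrA. Qed.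

Lemma dot0l w : dot 0 w = 0.
Proof. by rewrite -(scale0r 0) dotZl mul0r. Qed.

Lemma dotBl u v w : dot (u - v) w = dot u w - dot v w.
Proof. by rewrite dotDl dotNl. Qed.

Lemma dotDr u v w : dot w (u + v) = dot w u + dot w v.
Proof. by rewrite dotC dotDl !(dotC w). Qed.

Lemma dotNr u w : dot w (- u) = - dot w u.
Proof. by rewrite dotC dotNl dotC. Qed.

Lemma dotBr u v w : dot w (u - v) = dot w u - dot w v.
Proof. by rewrite dotDr dotNr. Qed.

Lemma dotZr (k : R) u w : dot w (k *: u) = k * dot w u.
Proof. by rewrite dotC dotZl dotC. Qed.

Lemma dot0r w : dot w 0 = 0.
Proof. by rewrite dotC dot0l. Qed.

Lemma dot_suml (I : finType) (P : pred I) (f : I -> 'rV[R]_d) w :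
  dot (\sum_(i | P i) f i) w = \sum_(i | P i) dot (f i) w.
Proof.
by rewrite /dot exchange_big; apply: eq_bigr => l _; rewrite summxE mulr_suml.
Qed.

Lemma dot_sumr (I : finType) (P : pred I) (f : I -> 'rV[R]_d) w :
  dot w (\sum_(i | P i) f i) = \sum_(i | P i) dot w (f i).
Proof. by rewrite dotC dot_suml; apply: eq_bigr => i _; rewrite dotC. Qed.

Lemma sq_ge0 u : 0 <= sq u.
Proof. by apply: sumr_ge0 => l _; rewrite -expr2 sqr_ge0. Qed.

Lemma sq_eq0 u : sq u = 0 -> u = 0.
Proof.
move/eqP; rewrite psumr_eq0 => [/allP sq0|l _]; last by rewrite -expr2 sqr_ge0.
apply/rowP => l; rewrite mxE.
by have /implyP/(_ isT) := sq0 l (mem_index_enum _); rewrite mulf_eq0 orbb => /eqP.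
Qed.

Lemma sqD u v : sq (u + v) = sq u + 2 * dot u v + sq v.
Proof. by rewrite /sq !dotDl !dotDr (dotC v u); ring. Qed.

Lemma sqB u v : sq (u - v) = sq u - 2 * dot u v + sq v.
Proof. by rewrite /sq !dotBl !dotBr (dotC v u); ring. Qed.

Lemma sqN u : sq (- u) = sq u.
Proof. by rewrite /sq dotNl dotNr opprK. Qed.

Lemma sqZ (k : R) u : sq (k *: u) = k ^+ 2 * sq u.
Proof. by rewrite /sq dotZl dotZr mulrA expr2. Qed.

Lemma sqB_le u v : sq (u - v) <= 2 * sq u + 2 * sq v.
Proof. by have := sq_ge0 (u + v); rewrite sqB sqD; lra. Qed.

Lemma enormE u : enorm u = Num.sqrt (sq u).
Proof. by []. Qed.

Lemma enorm_sq u : enorm u ^+ 2 = sq u.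
Proof. exact/sqr_sqrtr/sq_ge0. Qed.

Lemma enorm_ge0 u : 0 <= enorm u.
Proof. exact: sqrtr_ge0. Qed.

Lemma enorm_eq0 u : enorm u = 0 -> u = 0.
Proof. by move=> u0; apply: sq_eq0; rewrite -enorm_sq u0 expr0n. Qed.

Lemma enorm_gt0 u : u != 0 -> 0 < enorm u.
Proof.
by move=> /eqP u0; rewrite lt_neqAle enorm_ge0 andbT eq_sym; apply/eqP => /enorm_eq0.
Qed.

Lemma enorm0 : enorm (0 : 'rV[R]_d) = 0.
Proof. by rewrite enormE /sq dot0l sqrtr0. Qed.

Lemma enormN u : enorm (- u) = enorm u.
Proof. by rewrite !enormE sqN. Qed.

Lemma enormZ (k : R) u : enorm (k *: u) = `|k| * enorm u.
Proof. by rewrite !enormE sqZ sqrtrM ?sqr_ge0 // sqrtr_sqr. Qed.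

Lemma cauchy_schwarz u v : dot u v <= enorm u * enorm v.
Proof.
have [->|u0] := eqVneq u 0; first by rewrite dot0l enorm0 mul0r.
have [->|v0] := eqVneq v 0; first by rewrite dot0r enorm0 mulr0.
have := sq_ge0 (enorm v *: u - enorm u *: v).
rewrite sqB !sqZ dotZl dotZr -!enorm_sq.
have := mulr_gt0 (enorm_gt0 u0) (enorm_gt0 v0).
set nu := enorm u; set nv := enorm v; move=> nuv h.
have : 0 <= (nu * nv) * (2 * (nu * nv - dot u v)) by move: h; nra.
by rewrite pmulr_rge0 // => h2; nra.
Qed.

Lemma enorm_triangle u v : enorm (u + v) <= enorm u + enorm v.
Proof.
have := cauchy_schwarz u v; have := enorm_ge0 u; have := enorm_ge0 v.
move=> hu hv cs; rewrite -(ler_pXn2r (n := 2)) ?nnegrE ?addr_ge0 ?enorm_ge0 //.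
by rewrite enorm_sq sqD -!enorm_sq; nra.
Qed.

Lemma enorm_midpoint u v :
  enorm (2^-1 *: (u + v)) <= 2^-1 * enorm u + 2^-1 * enorm v.
Proof.
rewrite enormZ ger0_norm ?invr_ge0 ?ler0n // -mulrDr.
by rewrite ler_pM2l ?invr_gt0 ?ltr0n // enorm_triangle.
Qed.

(* The unit vector in the direction of v (0 for v = 0): a subgradient of the
   norm at v, antisymmetric in v. *)
Definition unitv v : 'rV[R]_d := (enorm v)^-1 *: v.

Lemma unitvN v : unitv (- v) = - unitv v.
Proof. by rewrite /unitv enormN scalerN. Qed.

Lemma unitv0 : unitv 0 = 0.
Proof. by rewrite /unitv scaler0. Qed.

Lemma enorm_subgrad u w : enorm u + dot w (unitv u) <= enorm (u + w).
Proof.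
have [->|u0] := eqVneq u 0; first by rewrite unitv0 dot0r enorm0 !add0r enorm_ge0.
have nu := enorm_gt0 u0.
have -> : enorm u = dot u (unitv u).
  by rewrite /unitv dotZr -/(sq u) -enorm_sq expr2 mulrA mulVf ?mul1r ?gt_eqF.
rewrite -dotDl; apply: le_trans (cauchy_schwarz _ _) _.
by rewrite /unitv enormZ gtr0_norm ?invr_gt0 // mulVf ?gt_eqF // mulr1.
Qed.

(* The tangent line of the square root at e^2 lies above it. *)
Lemma sqrt_tangent (e N : R) : 0 < e -> N <= e + (N ^+ 2 - e ^+ 2) / (2 * e).
Proof.
move=> e0; rewrite -subr_ge0.
have -> : e + (N ^+ 2 - e ^+ 2) / (2 * e) - N = (N - e) ^+ 2 / (2 * e).
  by field; rewrite gt_eqF.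
by rewrite divr_ge0 ?sqr_ge0 // mulr_ge0 // ltW.
Qed.

Lemma enorm_expand v w (eps : R) : v != 0 ->
  enorm (v + eps *: w) <=
    enorm v + eps * dot w (unitv v) + eps ^+ 2 * (sq w / (2 * enorm v)).
Proof.
move=> v0; have nv := enorm_gt0 v0.
apply: le_trans (sqrt_tangent (enorm (v + eps *: w)) nv) _.
rewrite enorm_sq sqD sqZ dotZr -enorm_sq /unitv dotZr dotC le_eqVlt; apply/orP; left.
by apply/eqP; field; rewrite gt_eqF.
Qed.

End Euclid.

Lemma sum_pairs (R : realType) (m : nat) (A : 'I_m -> 'I_m -> R) :
  (forall i, A i i = 0) ->
  \sum_(i < m) \sum_(j < m | (i < j)%N) (A i j + A j i) =
  \sum_(i < m) \sum_(j < m) A i j.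
Proof.
move=> A0.
have split_row i : \sum_(j < m) A i j =
    \sum_(j < m | (i < j)%N) A i j + \sum_(j < m | (j < i)%N) A i j.
  rewrite (bigID (fun j : 'I_m => (i < j)%N)) /=; congr (_ + _).
  rewrite (bigID (fun j : 'I_m => (j < i)%N)) /= [X in _ + X]big1 ?addr0.
    by apply: eq_bigl => j; case: ltngtP.
  move=> j /andP[]; rewrite -leqNgt -leqNgt => ji ij.
  have -> : j = i by apply/val_inj/eqP; rewrite eqn_leq ji ij.
  exact: A0.
under [RHS]eq_bigr => i _ do rewrite split_row.
rewrite big_split /=; under eq_bigr => i _ do rewrite big_split /=.
rewrite big_split /=; congr (_ + _).
by rewrite (exchange_big_dep xpredT) //=.
Qed.

Section Objective.
Variables (R : realType) (m d : nat).
Implicit Types (w : 'I_m -> R) (x y z : 'I_m -> 'rV[R]_d).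

Definition fit y w x : R := \sum_(i < m) w i * sq (x i - y i).

Definition pen w x : R :=
  \sum_(i < m) \sum_(j < m | (i < j)%N) w i * w j * enorm (x i - x j).

Definition wdist2 w x z : R := \sum_(i < m) w i * sq (z i - x i).

Lemma cc_objE y w lam x : cc_obj y w lam x = 2^-1 * fit y w x + lam * pen w x.
Proof. by congr (_ * _ + _); apply: eq_bigr => i _; rewrite enorm_sq. Qed.

Lemma pen_ge0 w x : (forall i, 0 <= w i) -> 0 <= pen w x.
Proof.
move=> w0; do 2!apply: sumr_ge0 => ? _.
by rewrite !mulr_ge0 ?enorm_ge0.
Qed.

Lemma pen_sym w x :
  pen w x = \sum_(i < m) \sum_(j < m) 2^-1 * (w i * w j * enorm (x i - x j)).
Proof.
rewrite -sum_pairs => [|i]; last by rewrite subrr enorm0 !mulr0.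
apply: eq_bigr => i _; apply: eq_bigr => j _.
by rewrite -(opprB (x i)) enormN; field.
Qed.

Lemma wdist2C w x z : wdist2 w x z = wdist2 w z x.
Proof. by apply: eq_bigr => i _; rewrite -sqN opprB. Qed.

Lemma wdist2_term w x z i :
  (forall i, 0 <= w i) -> w i * sq (z i - x i) <= wdist2 w x z.
Proof.
move=> w0; rewrite /wdist2 (bigD1 i) //= lerDl.
by apply: sumr_ge0 => k _; rewrite mulr_ge0 ?sq_ge0.
Qed.

Lemma wdist2_ge0 w x z : (forall i, 0 <= w i) -> 0 <= wdist2 w x z.
Proof. by move=> w0; apply: sumr_ge0 => i _; rewrite mulr_ge0 ?sq_ge0. Qed.

Lemma wdist2_le0 w x z :
  (forall i, 0 < w i) -> wdist2 w x z <= 0 -> forall i, z i = x i.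
Proof.
move=> w0 d0 i; have w0' k : 0 <= w k by exact/ltW.
have /eqP : wdist2 w x z = 0 by apply/eqP; rewrite eq_le d0 wdist2_ge0.
rewrite psumr_eq0 => [/allP/(_ i (mem_index_enum _))|k _]; last first.
  by rewrite mulr_ge0 ?sq_ge0.
rewrite implyTb mulf_eq0 gt_eqF //= => /eqP/sq_eq0/eqP.
by rewrite subr_eq0 => /eqP.
Qed.

Lemma wdist2_merge w x z i j : (forall i, 0 <= w i) -> z i = z j ->
  Num.min (w i) (w j) * sq (x i - x j) <= 4 * wdist2 w x z.
Proof.
move=> w0 zij.
have -> : x i - x j = (z j - x j) - (z i - x i).
  by rewrite zij; apply/rowP => l; rewrite !mxE; ring.
have wmin0 : 0 <= Num.min (w i) (w j) by rewrite le_min !w0.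
have gap := ler_wpM2l wmin0 (sqB_le (z j - x j) (z i - x i)).
have termi : Num.min (w i) (w j) * sq (z i - x i) <= wdist2 w x z.
  by apply: le_trans (wdist2_term _ _ i w0); rewrite ler_wpM2r ?sq_ge0 ?ge_min ?lexx.
have termj : Num.min (w i) (w j) * sq (z j - x j) <= wdist2 w x z.
  apply: le_trans (wdist2_term _ _ j w0).
  by rewrite ler_wpM2r ?sq_ge0 // ge_min lexx orbT.
by apply: le_trans gap _; lra.
Qed.

(* Quadratic growth of the objective around its minimiser, obtained by
   comparing with the midpoint configuration. *)
Lemma quadratic_growth y w lam x z :
  (forall i, 0 <= w i) -> 0 <= lam -> is_cc_min y w lam x ->
  wdist2 w x z / 4 <= cc_obj y w lam z - cc_obj y w lam x.
Proof.
move=> w0 lam0 xmin.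
pose mid i := 2^-1 *: (x i + z i).
have fit_mid :
    fit y w mid = 2^-1 * fit y w x + 2^-1 * fit y w z - 4^-1 * wdist2 w x z.
  rewrite /fit /wdist2 !mulr_sumr -big_split -sumrB; apply: eq_bigr => i _ /=.
  have -> : mid i - y i = 2^-1 *: ((x i - y i) + (z i - y i)).
    by apply/rowP => l; rewrite /mid !mxE; field.
  have -> : z i - x i = (z i - y i) - (x i - y i).
    by apply/rowP => l; rewrite !mxE; ring.
  set p := x i - y i; set q := z i - y i.
  by rewrite sqZ sqD sqB (dotC q p); field.
have pen_mid : pen w mid <= 2^-1 * pen w x + 2^-1 * pen w z.
  rewrite /pen !mulr_sumr -big_split; apply: ler_sum => i _.
  rewrite !mulr_sumr -big_split; apply: ler_sum => j _.
  have -> : mid i - mid j = 2^-1 *: ((x i - x j) + (z i - z j)).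
    by apply/rowP => l; rewrite /mid !mxE; field.
  apply: le_trans (ler_wpM2l (mulr_ge0 (w0 i) (w0 j)) (enorm_midpoint _ _)) _.
  by rewrite mulrDr !mulrA !(mulrC _ 2^-1) !mulrA.
have := xmin mid; rewrite !cc_objE fit_mid.
by have := ler_wpM2l lam0 pen_mid; nra.
Qed.

Lemma minimiser_increment y w mu mu' x x' :
  (forall i, 0 <= w i) -> 0 <= mu -> mu <= mu' ->
  is_cc_min y w mu x -> is_cc_min y w mu' x' ->
  wdist2 w x x' <= 2 * (mu' - mu) * pen w x.
Proof.
move=> w0 mu0 mumu' xmin x'min.
have g := quadratic_growth x' w0 mu0 xmin.
have g' := quadratic_growth x (w0) (le_trans mu0 mumu') x'min.
rewrite wdist2C !cc_objE in g'; rewrite !cc_objE in g.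
have := pen_ge0 x' w0; have := pen_ge0 x w0.
by nra.
Qed.

End Objective.

Lemma linear_coef_ge0 (R : realType) (A B : R) : 0 <= B ->
  (forall eps, 0 < eps -> 0 <= eps * A + eps ^+ 2 * B) -> 0 <= A.
Proof.
move=> B0 small; rewrite leNgt; apply/negP => A0.
have eps0 : 0 < - A / (B + 1) by rewrite divr_gt0 // ?oppr_gt0 //; lra.
have := small _ eps0.
have -> : - A / (B + 1) * A + (- A / (B + 1)) ^+ 2 * B =
          (- A / (B + 1)) * (A / (B + 1)) by field; lra.
have Ab : A / (B + 1) < 0 by rewrite pmulr_llt0 // invr_gt0; lra.
by rewrite pmulr_rge0 // leNgt Ab.
Qed.

Section Balanced.
Variables (R : realType) (m d : nat) (r : 'I_m -> R) (x del : 'I_m -> 'rV[R]_d).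

Definition balanced : Prop :=
  forall p, \sum_(j < m | x j == p) r j *: del j = 0.

Hypotheses (hr : forall i, 0 < r i) (hbal : balanced).

Lemma balanced_orth (V : 'rV[R]_d -> 'rV[R]_d) :
  \sum_(i < m) r i * dot (del i) (V (x i)) = 0.
Proof.
pose W p := \sum_(j < m | x j == p) r j.
have W0 i : W (x i) != 0.
  rewrite gt_eqF // /W (bigD1 i) //= (lt_le_trans (hr i)) // lerDl.
  by apply: sumr_ge0 => j _; exact/ltW.
have avg1 i : \sum_(j < m | x j == x i) r j / W (x i) = 1.
  by rewrite -mulr_suml -/(W (x i)) mulfV.
transitivity (\sum_(i < m) \sum_(j < m | x j == x i)
                r j / W (x i) * (r i * dot (del i) (V (x i)))).
  by apply: eq_bigr => i _; rewrite -mulr_suml avg1 mul1r.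
rewrite (exchange_big_dep xpredT) //=; apply: big1 => j _.
transitivity (\sum_(i < m | x i == x j) r j / W (x j) * dot (r i *: del i) (V (x j))).
  apply: eq_big => [i|i /eqP ->]; first by rewrite eq_sym.
  by rewrite dotZl.
by rewrite -mulr_sumr -dot_suml hbal dot0l mulr0.
Qed.

(* Between-cluster interactions through an antisymmetric field cancel: this
   is where the product form r_i r_j of the weights is used. *)
Lemma balanced_pair_orth (G : 'rV[R]_d -> 'rV[R]_d -> 'rV[R]_d) :
  (forall p q, G p q = - G q p) ->
  \sum_(i < m) \sum_(j < m | (i < j)%N)
     r i * r j * dot (del i - del j) (G (x i) (x j)) = 0.
Proof.
move=> Gsym.
have G0 p : G p p = 0.
  apply/rowP => l; have := congr1 (fun v : 'rV[R]_d => v 0 l) (Gsym p p).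
  by rewrite /= !mxE; lra.
pose A i j := r i * r j * dot (del i) (G (x i) (x j)).
transitivity (\sum_(i < m) \sum_(j < m | (i < j)%N) (A i j + A j i)).
  apply: eq_bigr => i _; apply: eq_bigr => j _.
  by rewrite /A dotBl (Gsym (x j)) dotNr; ring.
rewrite sum_pairs => [|i]; last by rewrite /A G0 dot0r mulr0.
rewrite -[RHS](balanced_orth (fun p => \sum_(j < m) r j *: G p (x j))).
apply: eq_bigr => i _; rewrite dot_sumr mulr_sumr; apply: eq_bigr => j _.
by rewrite /A dotZr mulrA.
Qed.

End Balanced.

Section FirstOrder.
Variables (R : realType) (m d : nat) (a : 'I_m -> 'rV[R]_d) (r : 'I_m -> R).
Variables (x del : 'I_m -> 'rV[R]_d).

(* Coefficients of the expansion of the objective at x + eps del. *)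
Definition lin_fit : R := \sum_(i < m) r i * dot (del i) (x i - a i).

Definition sq_dev : R := \sum_(i < m) r i * sq (del i).

Definition pen_within : R := \sum_(i < m) \sum_(j < m | (i < j)%N)
  r i * r j * (if x i == x j then enorm (del i - del j) else 0).

Definition curv_across : R := \sum_(i < m) \sum_(j < m | (i < j)%N)
  r i * r j * (if x i == x j then 0
               else sq (del i - del j) / (2 * enorm (x i - x j))).

Hypotheses (hr : forall i, 0 < r i) (hbal : balanced r x del).

Let hr0 i : 0 <= r i. Proof. exact/ltW. Qed.

Lemma sq_dev_ge0 : 0 <= sq_dev.
Proof. by apply: sumr_ge0 => i _; rewrite mulr_ge0 ?sq_ge0. Qed.

Lemma pen_within_ge0 : 0 <= pen_within.
Proof.
do 2!apply: sumr_ge0 => ? _.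
by case: ifP; rewrite ?mulr0 // !mulr_ge0 ?enorm_ge0.
Qed.

Lemma curv_across_ge0 : 0 <= curv_across.
Proof.
do 2!apply: sumr_ge0 => ? _.
by case: ifP; rewrite ?mulr0 // !mulr_ge0 ?sq_ge0 ?invr_ge0 ?mulr_ge0 ?enorm_ge0.
Qed.

Lemma fit_shift eps :
  fit a r (fun i => x i + eps *: del i) =
  fit a r x + eps * (2 * lin_fit) + eps ^+ 2 * sq_dev.
Proof.
rewrite /fit /lin_fit /sq_dev !mulr_sumr -!big_split; apply: eq_bigr => i _ /=.
have -> : x i + eps *: del i - a i = (x i - a i) + eps *: del i.
  by rewrite addrAC.
by rewrite sqD sqZ dotZr dotC; ring.
Qed.

(* The linear part of the penalty across clusters cancels by balancedness;
   within a cluster the penalty grows linearly. *)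
Lemma pen_shift eps : 0 < eps ->
  pen r (fun i => x i + eps *: del i) <=
  pen r x + eps * pen_within + eps ^+ 2 * curv_across.
Proof.
move=> eps0.
pose L := \sum_(i < m) \sum_(j < m | (i < j)%N)
            r i * r j * dot (del i - del j) (unitv (x i - x j)).
have L0 : L = 0.
  rewrite /L; apply: (balanced_pair_orth hr hbal (G := fun p q => unitv (p - q))) => p q.
  by rewrite -unitvN opprB.
apply: (@le_trans _ _ (pen r x + eps * L + eps * pen_within + eps ^+ 2 * curv_across)).
  rewrite /pen /L /pen_within /curv_across !mulr_sumr -!big_split.
  apply: ler_sum => i _; rewrite !mulr_sumr -!big_split; apply: ler_sum => j _ /=.
  have -> : x i + eps *: del i - (x j + eps *: del j) =
            (x i - x j) + eps *: (del i - del j).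
    by apply/rowP => l; rewrite !mxE; ring.
  have term : enorm ((x i - x j) + eps *: (del i - del j)) <=
      enorm (x i - x j) + eps * dot (del i - del j) (unitv (x i - x j))
      + eps * (if x i == x j then enorm (del i - del j) else 0)
      + eps ^+ 2 * (if x i == x j
                    then 0 else sq (del i - del j) / (2 * enorm (x i - x j))).
    case: eqP => [->|/eqP xij]; last first.
      by rewrite mulr0 addr0; apply: enorm_expand; rewrite subr_eq0.
    rewrite subrr add0r enorm0 unitv0 dot0r enormZ gtr0_norm //.
    by rewrite !mulr0 !add0r addr0.
  apply: le_trans (ler_wpM2l (mulr_ge0 (hr0 i) (hr0 j)) term) _.
  set t1 := (if _ then enorm _ else _); set t2 := (if _ then 0 else _).
  by rewrite le_eqVlt; apply/orP; left; apply/eqP; ring.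
by rewrite L0 mulr0 addr0.
Qed.

(* Optimality of x against x + eps del for all small eps > 0. *)
Lemma first_order mu : 0 <= mu -> is_cc_min a r mu x ->
  0 <= lin_fit + mu * pen_within.
Proof.
move=> mu0 xmin.
apply: (@linear_coef_ge0 _ _ (2^-1 * sq_dev + mu * curv_across)).
  by rewrite addr_ge0 ?mulr_ge0 ?invr_ge0 ?ler0n ?sq_dev_ge0 ?curv_across_ge0.
move=> eps eps0.
have := xmin (fun i => x i + eps *: del i); rewrite !cc_objE fit_shift.
by have := ler_wpM2l mu0 (pen_shift eps0); nra.
Qed.

End FirstOrder.

Section NoSplit.
Variables (R : realType) (m d : nat) (a : 'I_m -> 'rV[R]_d) (r : 'I_m -> R).
Variables (x y : 'I_m -> 'rV[R]_d).
Hypothesis hr : forall i, 0 < r i.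

Definition cluster_mean (p : 'rV[R]_d) : 'rV[R]_d :=
  (\sum_(j < m | x j == p) r j)^-1 *: \sum_(j < m | x j == p) r j *: y j.

Let ybar i := cluster_mean (x i).
Let dev i := y i - ybar i.

Lemma dev_balanced : balanced r x dev.
Proof.
move=> p; pose W := \sum_(j < m | x j == p) r j.
transitivity (\sum_(j < m | x j == p) r j *: y j - W *: cluster_mean p).
  rewrite /W scaler_suml -sumrB; apply: eq_bigr => j /eqP xj.
  by rewrite /dev /ybar xj scalerBr.
rewrite /cluster_mean -/W scalerA.
have [W0|W0] := eqVneq W 0; last by rewrite mulfV // scale1r subrr.
rewrite W0 mul0r scale0r subr0 big1 // => j xj.
have /eqP := W0; rewrite psumr_eq0 => [/allP/(_ j (mem_index_enum _))|k _].
  by rewrite xj implyTb => /eqP ->; rewrite scale0r.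
exact/ltW.
Qed.

(* Pythagoras for the fit term: dev is orthogonal to fields constant on the
   clusters of x, such as ybar and x itself. *)
Lemma fit_decomp : fit a r y = fit a r ybar + 2 * lin_fit a r x dev + sq_dev r dev.
Proof.
have lin_fitE : lin_fit a r x dev = \sum_(i < m) r i * dot (dev i) (ybar i - a i).
  transitivity (\sum_(i < m) r i * dot (dev i) (ybar i - a i)
                + \sum_(i < m) r i * dot (dev i) (id (x i))
                - \sum_(i < m) r i * dot (dev i) (cluster_mean (x i))).
    rewrite -big_split -sumrB; apply: eq_bigr => i _ /=.
    by rewrite /ybar !dotBr; ring.
  rewrite (balanced_orth hr dev_balanced id).
  by rewrite (balanced_orth hr dev_balanced cluster_mean) addr0 subr0.
rewrite lin_fitE /fit /sq_dev mulr_sumr -!big_split; apply: eq_bigr => i _ /=.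
have -> : y i - a i = (ybar i - a i) + dev i.
  by apply/rowP => l; rewrite /dev !mxE; ring.
by rewrite sqD dotC; ring.
Qed.

(* Subgradient inequality for the penalty at ybar; the linear terms between
   different clusters cancel by balancedness. *)
Lemma pen_decomp : pen r ybar + pen_within r x dev <= pen r y.
Proof.
pose L := \sum_(i < m) \sum_(j < m | (i < j)%N)
  r i * r j * dot (dev i - dev j) (unitv (cluster_mean (x i) - cluster_mean (x j))).
have L0 : L = 0.
  rewrite /L; apply: (balanced_pair_orth hr dev_balanced
                        (G := fun p q => unitv (cluster_mean p - cluster_mean q))).
  by move=> p q; rewrite -unitvN opprB.
apply: (@le_trans _ _ (pen r ybar + pen_within r x dev + L)).
  by rewrite L0 addr0.
rewrite /pen /L /pen_within -!big_split; apply: ler_sum => i _ /=.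
rewrite -!big_split; apply: ler_sum => j _ /=.
rewrite -!mulrDr; apply: ler_wpM2l; first by rewrite mulr_ge0 // ltW.
have -> : y i - y j = (ybar i - ybar j) + (dev i - dev j).
  by apply/rowP => l; rewrite /dev !mxE; ring.
case: eqP => [xij|_]; last by rewrite addr0; apply: enorm_subgrad.
by rewrite /ybar xij subrr add0r enorm0 unitv0 dot0r addr0 add0r.
Qed.

Theorem no_split mu mu' : 0 <= mu -> mu <= mu' ->
  is_cc_min a r mu x -> is_cc_min a r mu' y -> forall i j, x i = x j -> y i = y j.
Proof.
move=> mu0 mumu' xmin ymin.
have x_opt := first_order hr dev_balanced mu0 xmin.
have y_opt := ymin ybar; rewrite !cc_objE fit_decomp in y_opt.
have pen_y := ler_wpM2l (le_trans mu0 mumu') pen_decomp.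
have pen_w := ler_wpM2r (pen_within_ge0 x dev hr) mumu'.
have dev0 : sq_dev r dev <= 0 by lra.
move=> i j xij.
by rewrite (wdist2_le0 hr dev0 i) (wdist2_le0 hr dev0 j) /ybar xij.
Qed.

End NoSplit.

Section Reduction.
Variables (R : realType) (n K d : nat) (c : 'I_n -> 'I_K) (r : 'I_n -> R).
Variable a : 'I_n -> 'rV[R]_d.

Lemma sum_by_cluster (F : 'I_K -> R) :
  \sum_(i < n) r i * F (c i) = \sum_(k < K) red_weight c r k * F k.
Proof.
rewrite (partition_big c xpredT) //=; apply: eq_bigr => k _.
by rewrite /red_weight mulr_suml; apply: eq_bigr => i /eqP <-.
Qed.

(* The product weights make the penalty of a lifted configuration equal to
   the reduced penalty with weights r'_k. *)
Lemma pen_lift (w : 'I_K -> 'rV[R]_d) :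
  pen r (fun i => w (c i)) = pen (red_weight c r) w.
Proof.
rewrite !pen_sym.
transitivity (\sum_(i < n) r i *
    \sum_(k' < K) red_weight c r k' * (2^-1 * enorm (w (c i) - w k'))).
  apply: eq_bigr => i _; rewrite -sum_by_cluster mulr_sumr.
  by apply: eq_bigr => j _; ring.
rewrite (sum_by_cluster (fun k => \sum_(k' < K) red_weight c r k' *
                                   (2^-1 * enorm (w k - w k')))).
by apply: eq_bigr => k _; rewrite mulr_sumr; apply: eq_bigr => k' _; ring.
Qed.

Definition scatter : R :=
  \sum_(k < K) (\sum_(i < n | c i == k) r i * sq (a i)
                - red_weight c r k * sq (red_center c r a k)).

Hypotheses (hr : forall i, 0 < r i) (hc : forall k, exists i, c i = k).

Lemma red_weight_neq0 k : red_weight c r k != 0.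
Proof.
have [i cik] := hc k; rewrite gt_eqF // /red_weight (bigD1 i) /= ?cik //.
apply: (lt_le_trans (hr i)); rewrite lerDl.
by apply: sumr_ge0 => j _; exact/ltW.
Qed.

Lemma fit_lift (w : 'I_K -> 'rV[R]_d) :
  fit a r (fun i => w (c i)) = fit (red_center c r a) (red_weight c r) w + scatter.
Proof.
rewrite /fit /scatter -big_split /= (partition_big c xpredT) //=.
apply: eq_bigr => k _.
transitivity (\sum_(i < n | c i == k)
                (r i * sq (w k) - 2 * dot (w k) (r i *: a i) + r i * sq (a i))).
  by apply: eq_bigr => i /eqP ->; rewrite sqB dotZr; ring.
rewrite big_split sumrB /= -[X in _ - X + _]mulr_sumr -dot_sumr -mulr_suml.
have -> : \sum_(i < n | c i == k) r i *: a i = red_weight c r k *: red_center c r a k.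
  by rewrite /red_center scalerA mulfV ?red_weight_neq0 // scale1r.
by rewrite -/(red_weight c r k) dotZr sqB; ring.
Qed.

Lemma cc_obj_lift lam (w : 'I_K -> 'rV[R]_d) :
  cc_obj a r lam (fun i => w (c i)) =
  cc_obj (red_center c r a) (red_weight c r) lam w + 2^-1 * scatter.
Proof. by rewrite !cc_objE fit_lift pen_lift; ring. Qed.

Lemma reduced_minimiser lam (yh xhat : 'I_K -> 'rV[R]_d) : 0 <= lam ->
  is_cc_min a r lam (fun i => yh (c i)) ->
  is_cc_min (red_center c r a) (red_weight c r) lam xhat ->
  forall k, xhat k = yh k.
Proof.
move=> lam0 ymin xmin k.
have hr0 i : 0 <= r i by exact/ltW.
have lift_le : cc_obj a r lam (fun i => xhat (c i)) <= cc_obj a r lam (fun i => yh (c i)).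
  by rewrite !cc_obj_lift lerD2r.
have := quadratic_growth (fun i => xhat (c i)) hr0 lam0 ymin.
have := wdist2_ge0 (fun i => yh (c i)) (fun i => xhat (c i)) hr0.
set D := wdist2 _ _ _ => D0 growth.
have D_le0 : D <= 0 by lra.
by have [i <-] := hc k; exact: (wdist2_le0 hr D_le0 i).
Qed.

End Reduction.

Section FusionPath.
Variables (R : realType) (n d : nat) (a : 'I_n -> 'rV[R]_d) (r : 'I_n -> R).
Variable xs : R -> 'I_n -> 'rV[R]_d.
Hypotheses (hr : forall i, 0 < r i)
           (hxs : forall mu, 0 <= mu -> is_cc_min a r mu (xs mu)).

Let hr0 i : 0 <= r i. Proof. exact/ltW. Qed.

(* Two points apart at mu0 stay apart on a right neighbourhood of mu0: by
   the Hoelder estimate, merging them would cost more than it can. *)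
Lemma separation_persists i j mu0 : 0 <= mu0 -> xs mu0 i != xs mu0 j ->
  exists2 eps, 0 < eps & forall mu, mu0 <= mu -> mu < mu0 + eps -> xs mu i != xs mu j.
Proof.
move=> mu00 sep0.
set h := sq (xs mu0 i - xs mu0 j).
have h0 : 0 < h.
  rewrite lt_neqAle sq_ge0 andbT eq_sym; apply: contra sep0 => /eqP/sq_eq0/eqP.
  by rewrite subr_eq0.
set rmin := Num.min (r i) (r j).
have rmin0 : 0 < rmin by rewrite lt_min !hr.
set P := pen r (xs mu0).
have P0 : 0 <= P by exact: pen_ge0.
exists (rmin * h / (8 * (P + 1))); first by rewrite divr_gt0 ?mulr_gt0 //; lra.
move=> mu mu0mu mu_lt; apply/eqP => fused.
have merge := wdist2_merge (xs mu0) hr0 fused.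
have incr := minimiser_increment hr0 mu00 mu0mu (hxs mu00) (hxs (le_trans mu00 mu0mu)).
rewrite -/rmin -/h in merge; rewrite -/P in incr.
have small : (mu - mu0) * (8 * (P + 1)) < rmin * h.
  by rewrite -ltr_pdivlMr ?mulr_gt0 //; lra.
have : (mu - mu0) * P <= (mu - mu0) * (P + 1) by rewrite ler_wpM2l ?subr_ge0 //; lra.
by lra.
Qed.

Lemma first_fusion i j mu1 mu : 0 <= mu1 -> mu1 <= mu ->
  xs mu1 i != xs mu1 j -> xs mu i = xs mu j ->
  exists2 mu0, mu1 < mu0 <= mu & is_fusion_value xs mu0.
Proof.
move=> mu10 mu1mu sep1 fus.
pose S := [set t | mu1 <= t <= mu /\ xs t i = xs t j]%classic.
have Smu : S mu by rewrite /S /= mu1mu lexx.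
have Sinf : has_inf S by split; [exists mu | exists mu1 => t [/andP[]]].
have mu0_lb : lbound S (inf S) := ge_inf Sinf.2.
have mu1_mu0 : mu1 <= inf S by apply: lb_le_inf; [exists mu | move=> t [/andP[]]].
have mu0_mu : inf S <= mu by exact: mu0_lb.
have fus0 : xs (inf S) i = xs (inf S) j.
  apply/eqP/negPn/negP => sep0.
  have [eps eps0 far] := separation_persists (le_trans mu10 mu1_mu0) sep0.
  have [t St t_lt] := inf_adherent eps0 Sinf.
  by move: St (St) => [_ /eqP ft] /mu0_lb mu0t; move: ft; apply/negP/far.
have mu1_lt : mu1 < inf S.
  by rewrite lt_neqAle mu1_mu0 andbT; apply: contraNneq sep1 => ->; exact/eqP.
exists (inf S); first by rewrite mu1_lt mu0_mu.
split; first exact: le_lt_trans mu1_lt.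
exists i, j; split; first by apply: contraNneq sep1 => ->.
split=> // t t0 t_lt ft.
have [mu1t|tmu1] := leP mu1 t.
  have St : S t by split => //; rewrite mu1t (le_trans (ltW t_lt) mu0_mu).
  by move: (mu0_lb t St); rewrite leNgt t_lt.
by move/eqP: sep1; apply; exact: (no_split hr t0 (ltW tmu1) (hxs t0) (hxs mu10)).
Qed.

Lemma clusters_frozen mu1 mu : 0 <= mu1 -> mu1 <= mu ->
  (forall t, mu1 < t -> t <= mu -> ~ is_fusion_value xs t) ->
  forall i j, xs mu1 i = xs mu1 j <-> xs mu i = xs mu j.
Proof.
move=> mu10 mu1mu nofus i j; split.
  exact: (no_split hr mu10 mu1mu (hxs mu10) (hxs (le_trans mu10 mu1mu))).
move=> fus; apply/eqP/negPn/negP => sep1.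
have [t /andP[mu1t tmu] fv] := first_fusion mu10 mu1mu sep1 fus.
exact: nofus mu1t tmu fv.
Qed.

End FusionPath.

Lemma factor_through (T : Type) (n K : nat) (c : 'I_n -> 'I_K) (y : 'I_n -> T) :
  (forall k, exists i, c i = k) -> (forall i j, c i = c j -> y i = y j) ->
  exists yh : 'I_K -> T, forall i, y i = yh (c i).
Proof.
move=> csurj cy.
have rep k : exists i, c i == k by have [i <-] := csurj k; exists i.
exists (fun k => y (xchoose (rep k))) => i; apply: cy.
by rewrite (eqP (xchooseP (rep (c i)))).
Qed.

Theorem lemma6p3 (R : realType) (n d : nat) (hn : (2 <= n)%N) (hd : (1 <= d)%N)
  (a : 'I_n -> 'rV[R]_d) (r : 'I_n -> R) (hr : forall i, 0 < r i)
  (xstar : R -> 'I_n -> 'rV[R]_d)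
  (hxstar : forall lam, 0 <= lam -> is_cc_min a r lam (xstar lam))
  (lam : R) (hlam : 0 < lam) (hnf : ~ is_fusion_value xstar lam)
  (lam1 : R)
  (hlam1 : (lam1 = 0 /\ forall mu, 0 < mu -> mu < lam -> ~ is_fusion_value xstar mu)
        \/ (is_fusion_value xstar lam1 /\ lam1 < lam /\
            forall mu, lam1 < mu -> mu < lam -> ~ is_fusion_value xstar mu))
  (K : nat) (c : 'I_n -> 'I_K) (hcsurj : forall k : 'I_K, exists i, c i = k)
  (hc : forall i j, c i = c j <-> xstar lam1 i = xstar lam1 j)
  (xhat : 'I_K -> 'rV[R]_d)
  (hxhat : is_cc_min (red_center c r a) (red_weight c r) lam xhat) :
  forall k k' : 'I_K, k != k' -> xhat k <> xhat k'.
Proof.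
have [lam1_0 lam1_lam] : 0 <= lam1 /\ lam1 <= lam.
  by case: hlam1 => [[-> _]|[[lam1_0 _] [? _]]]; split => //; exact: ltW.
have nofus t : lam1 < t -> t <= lam -> ~ is_fusion_value xstar t.
  move=> lam1t; rewrite le_eqVlt => /orP[/eqP -> //|t_lt].
  by case: hlam1 => [[lam1E nf]|[_ [_ nf]]]; apply: nf => //; rewrite -lam1E.
have frozen := clusters_frozen hr hxstar lam1_0 lam1_lam nofus.
have [yh yhE] : exists yh, forall i, xstar lam i = yh (c i).
  by apply: factor_through hcsurj _ => i j /hc/frozen.
have ymin : is_cc_min a r lam (fun i => yh (c i)).
  by rewrite -(funext yhE); exact: hxstar (ltW hlam).
have xhatE := reduced_minimiser hr hcsurj (ltW hlam) ymin hxhat.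
move=> k k'; have [i <-] := hcsurj k; have [j <-] := hcsurj k' => cij.
rewrite !xhatE -!yhE => /frozen/hc cijE.
by rewrite cijE eqxx in cij.
Qed.
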